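(* For real $u\ge3$, $$P_3(u)=\tfrac12\mathrm{Li}_3\!\left(\frac{1}{u(2-u)}\right)-\mathrm{Li}_3\!\left(\frac1u\right)-\mathrm{Li}_3\!\left(\frac{1}{2-u}\right)+\mathrm{Li}_2\!\left(\frac1u\right)\log(u-2)+\tfrac13\zeta_3-\tfrac12\zeta_2\log(u)+\tfrac1{12}\log^3\!\big(u(u-2)\big)-\tfrac12\log^2(u-2)\log(u).$$
   Context: The functions $P_k$ are defined by $P_0(u)=1$ for $u\ge 0$, and for integers $k\ge1$, $P_k:[k,\infty)\to\mathbb{R}$ is the function with $P_k(k)=0$ and $uP_k'(u)=P_{k-1}(u-1)$ for $u\ge k$. Here $\mathrm{Li}_k(z)=\sum_{n\ge1}z^n/n^k$ for $|z|\le1$ and $\zeta_k=\mathrm{Li}_k(1)$. *)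

From Stdlib Require Import Reals.
From Coquelicot Require Import Coquelicot.
Open Scope R_scope.

Definition Li (k : nat) (z : R) : R :=
  Series (fun n : nat => z ^ (S n) / (INR (S n)) ^ k).

Definition zeta (k : nat) : R := Li k 1.

(* P_0 = 1;  P_k(u) = int_k^u P_{k-1}(t-1)/t dt, i.e. the unique function on
   [k,oo) with P_k(k) = 0 and u P_k'(u) = P_{k-1}(u-1). *)
Fixpoint P (k : nat) (u : R) : R :=
  match k with
  | O => 1
  | S j => RInt (fun t => P j (t - 1) / t) (INR (S j)) u
  end.

(* Both sides of the identity vanish at [u = 3] and, for [u > 3], have the same
   derivative [P_2(u-1)/u], where [P_1 = log] and
   [P_2(v) = log^2 v / 2 + Li_2(1/v) - zeta_2 / 2].
   Every polylogarithm identity used is proved the same way: the difference of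
   its two sides has derivative zero, by [Li_(k+1)'(z) = Li_k(z)/z] and
   [Li_1(z) = -log(1-z)], and is evaluated at one convenient point.  The
   derivative of the closed form for [P_3] needs Landen's dilogarithm identity
   and the three-term identity for the pair [1/u, 1/(2-u)]; its value at
   [u = 3] reduces to [Li_3(-1/3) - 2 Li_3(1/3)], which follows from the
   trilogarithm Landen identity at [1/3] and [1/4], the duplication formula
   and Landen's identity for Legendre's chi function at [1/2]. *)

From Stdlib Require Import Reals Lra Lia.
From Coquelicot Require Import Coquelicot.
Open Scope R_scope.

(** * Calculus on the real line *)

Lemma eq_of_is_derive_0 (f : R -> R) a b x y :
  (forall t, a < t < b -> is_derive f t 0) ->
  (forall t, a <= t <= b -> continuity_pt f t) ->
  a <= x <= b -> a <= y <= b -> f x = f y.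
Proof.
  intros Hd Hc Hx Hy.
  destruct (MVT_gen f y x (fun _ => 0)) as [c [_ Hfc]]; [| |lra]; intros t Ht;
    [apply Hd | apply Hc]; revert Ht; unfold Rmin, Rmax; destruct Rle_dec; lra.
Qed.

Lemma continuity_pt_ex_derive (f : R -> R) x : ex_derive f x -> continuity_pt f x.
Proof.
  intro H; apply continuity_pt_filterlim.
  exact (ex_derive_continuous (K := R_AbsRing) (V := R_NormedModule) f x H).
Qed.

Lemma is_derive_eq (f : R -> R) (x l l' : R) : is_derive f x l' -> l' = l -> is_derive f x l.
Proof. intros H <-; exact H. Qed.

Lemma is_derive_Rplus (f g : R -> R) x a b :
  is_derive f x a -> is_derive g x b -> is_derive (fun t => f t + g t) x (a + b).
Proof. apply (is_derive_plus (K := R_AbsRing) (V := R_NormedModule)). Qed.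

Lemma is_derive_Rminus (f g : R -> R) x a b :
  is_derive f x a -> is_derive g x b -> is_derive (fun t => f t - g t) x (a - b).
Proof. apply (is_derive_minus (K := R_AbsRing) (V := R_NormedModule)). Qed.

Lemma is_derive_Rmult (f g : R -> R) x a b :
  is_derive f x a -> is_derive g x b -> is_derive (fun t => f t * g t) x (a * g x + f x * b).
Proof. intros; apply (is_derive_mult (K := R_AbsRing)); auto; intros; apply Rmult_comm. Qed.

(* Unlike [is_RInt_derive], [F] need only be differentiable inside [(a, b)]:
   the closed form for [P_3] is not differentiable at [u = 3], where
   [1 / (2 - u) = -1]. *)
Lemma RInt_eq_of_is_derive (f F : R -> R) a b c :
  c < a <= b ->
  (forall x, c < x -> continuous f x) ->
  (forall x, a < x < b -> is_derive F x (f x)) ->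
  (forall x, a <= x <= b -> continuity_pt F x) ->
  RInt f a b = F b - F a.
Proof.
  intros Hab Hf HF HFc.
  assert (HI : forall w, c < w -> is_derive (RInt f a) w (f w)).
  { intros w Hw.
    apply (is_derive_RInt (V := R_CompleteNormedModule) f (RInt f a) a w); [|apply Hf, Hw].
    exists (mkposreal _ (proj2 (Rlt_0_minus _ _) Hw)); intros t Ht.
    change (Rabs (t - w) < w - c) in Ht; apply Rabs_def2 in Ht.
    apply RInt_correct, ex_RInt_continuous; intros z Hz; apply Hf.
    revert Hz; unfold Rmin, Rmax; destruct Rle_dec; lra. }
  enough (H : RInt f a b - F b = RInt f a a - F a)
    by (rewrite RInt_point in H; unfold zero in H; simpl in H; lra).
  apply (eq_of_is_derive_0 (fun w => RInt f a w - F w) a b); try lra; intros x Hx.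
  - eapply is_derive_eq; [apply is_derive_Rminus; [apply HI; lra | apply HF, Hx] | ring].
  - apply continuity_pt_minus; [|apply HFc, Hx].
    apply continuity_pt_ex_derive; eexists; apply HI; lra.
Qed.

Lemma Rabs_div_le_1 p q : q <> 0 -> Rabs p <= Rabs q -> Rabs (p / q) <= 1.
Proof.
  intros Hq Hpq; pose proof (Rabs_pos_lt q Hq).
  unfold Rdiv; rewrite Rabs_mult, Rabs_inv.
  apply (Rmult_le_reg_r (Rabs q)); [lra|].
  rewrite Rmult_assoc, Rinv_l, Rmult_1_r, Rmult_1_l by lra; exact Hpq.
Qed.

Lemma Rabs_div_lt_1 p q : Rabs p < Rabs q -> Rabs (p / q) < 1.
Proof.
  intro Hpq; pose proof (Rabs_pos p).
  unfold Rdiv; rewrite Rabs_mult, Rabs_inv.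
  apply (Rmult_lt_reg_r (Rabs q)); [lra|].
  rewrite Rmult_assoc, Rinv_l, Rmult_1_r, Rmult_1_l by lra; exact Hpq.
Qed.

Lemma Rabs_inv_le_1 q : 1 <= Rabs q -> Rabs (/ q) <= 1.
Proof.
  intro H; rewrite <- (Rdiv_1_l q); apply Rabs_div_le_1; rewrite ?Rabs_R1; [|exact H].
  intros ->; rewrite Rabs_R0 in H; lra.
Qed.

Lemma Rabs_inv_lt_1 q : 1 < Rabs q -> Rabs (/ q) < 1.
Proof. intro H; rewrite <- (Rdiv_1_l q); apply Rabs_div_lt_1; rewrite Rabs_R1; exact H. Qed.

(** * Polylogarithms as power series *)

Lemma INR_S_pos n : 0 < INR (S n).
Proof. apply lt_0_INR; lia. Qed.

Lemma INR_S_ge_1 n : 1 <= INR (S n).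
Proof. rewrite S_INR; pose proof (pos_INR n); lra. Qed.

Definition Li_coef (k n : nat) : R := / INR (S n) ^ k.

Lemma Li_coef_bounds k n : 0 < Li_coef k n <= 1.
Proof.
  pose proof (INR_S_ge_1 n). unfold Li_coef. split.
  - apply Rinv_0_lt_compat, pow_lt; lra.
  - rewrite <- Rinv_1; apply Rinv_le_contravar; [lra|].
    rewrite <- (pow1 k); apply pow_incr; lra.
Qed.

Lemma Li_PSeries k z : Li k z = z * PSeries (Li_coef k) z.
Proof.
  unfold Li, PSeries; rewrite <- Series_scal_l; apply Series_ext; intro n.
  unfold Li_coef; simpl; field; apply pow_nonzero, Rgt_not_eq, INR_S_pos.
Qed.

Lemma Li_0 k : Li k 0 = 0.
Proof. rewrite Li_PSeries; ring. Qed.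

Lemma CV_radius_Li_coef k z : Rabs z < 1 -> Rbar_lt (Rabs z) (CV_radius (Li_coef k)).
Proof.
  intro Hz; apply (Rbar_lt_le_trans _ 1); [exact Hz|].
  apply (proj1 (CV_radius_bounded (Li_coef k))); exists 1; intro n.
  pose proof (Li_coef_bounds k n).
  rewrite pow1, Rmult_1_r, Rabs_pos_eq; lra.
Qed.

Lemma is_derive_Li k z :
  Rabs z < 1 -> is_derive (Li (S k)) z (PSeries (Li_coef k) z).
Proof.
  intro Hz.
  apply (is_derive_ext (PSeries (PS_incr_1 (Li_coef (S k))))).
  { intro t; rewrite PSeries_incr_1; symmetry; apply Li_PSeries. }
  replace (PSeries (Li_coef k) z) with (PSeries (PS_derive (PS_incr_1 (Li_coef (S k)))) z).
  - apply is_derive_PSeries; rewrite CV_radius_incr_1; apply CV_radius_Li_coef, Hz.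
  - apply PSeries_ext; intro n; unfold PS_derive, Li_coef; cbn [PS_incr_1 pow].
    field; split; [apply pow_nonzero|]; apply Rgt_not_eq, INR_S_pos.
Qed.

Lemma PSeries_Li_coef k z : z <> 0 -> PSeries (Li_coef k) z = Li k z / z.
Proof. intro; rewrite Li_PSeries; field; assumption. Qed.

Lemma PSeries_Li_coef_0 z : Rabs z < 1 -> PSeries (Li_coef 0) z = / (1 - z).
Proof.
  intro Hz; apply is_series_unique.
  eapply is_series_ext; [|apply is_series_geom, Hz].
  intro n; unfold Li_coef; simpl; rewrite Rinv_1; ring.
Qed.

Lemma Li_1 z : Rabs z < 1 -> Li 1 z = - ln (1 - z).
Proof.
  intro Hz; pose proof (Rabs_pos z) as Hz0.
  enough (H : Li 1 z + ln (1 - z) = Li 1 0 + ln (1 - 0))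
    by (rewrite Li_0, Rminus_0_r, ln_1 in H; lra).
  apply (eq_of_is_derive_0 (fun t => Li 1 t + ln (1 - t)) (- Rabs z) (Rabs z));
    try (apply Rabs_le_between, Rle_refl); try lra; intros x Hx;
    assert (Hx1 : Rabs x < 1) by (apply Rabs_def1; lra).
  - replace 0 with (PSeries (Li_coef 0) x + (-1) / (1 - x))
      by (rewrite PSeries_Li_coef_0 by exact Hx1; field; lra).
    apply is_derive_Rplus; [apply is_derive_Li, Hx1 | auto_derive; [lra | field; lra]].
  - apply continuity_pt_ex_derive.
    apply (ex_derive_plus (K := R_AbsRing) (V := R_NormedModule));
      [eexists; apply is_derive_Li, Hx1 | auto_derive; lra].
Qed.

Lemma is_series_inv_telescope :
  is_series (fun n => / INR (S n) - / INR (S (S n))) 1.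
Proof.
  change (is_lim_seq (sum_n (fun n => / INR (S n) - / INR (S (S n)))) 1).
  apply (is_lim_seq_ext (fun N => 1 - / INR (S (S N)))).
  - intro N; induction N as [|N IH].
    + rewrite sum_O; simpl; field.
    + rewrite sum_Sn, <- IH; unfold plus; simpl; ring.
  - replace (Finite 1) with (Finite (1 - 0)) by (f_equal; ring).
    apply is_lim_seq_minus'; [apply is_lim_seq_const|].
    apply (is_lim_seq_ext (fun n => / INR (n + 2))).
    { intro n; f_equal; f_equal; lia. }
    apply (is_lim_seq_incr_n (fun n => / INR n) 2).
    change (Finite 0) with (Rbar_inv p_infty).
    apply is_lim_seq_inv; [apply is_lim_seq_INR | discriminate].
Qed.

Lemma ex_series_inv_sqr : ex_series (fun n => / INR (S n) ^ 2).
Proof.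
  apply (ex_series_le (K := R_AbsRing) (V := R_CompleteNormedModule) _
           (fun n => 2 * (/ INR (S n) - / INR (S (S n))))).
  - intro n; change (Rabs (/ INR (S n) ^ 2) <= 2 * (/ INR (S n) - / INR (S (S n)))).
    pose proof (INR_S_ge_1 n); rewrite S_INR with (n := S n).
    rewrite Rabs_pos_eq by (apply Rlt_le, Rinv_0_lt_compat, pow_lt; lra).
    apply Rminus_le_0.
    replace (2 * (/ INR (S n) - / (INR (S n) + 1)) - / INR (S n) ^ 2)
      with ((INR (S n) - 1) / (INR (S n) ^ 2 * (INR (S n) + 1))) by (field; lra).
    apply Rdiv_le_0_compat; [lra|]. apply Rmult_lt_0_compat; [apply pow_lt|]; lra.
  - apply (ex_series_scal_l (K := R_AbsRing) (V := R_NormedModule)).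
    eexists; apply is_series_inv_telescope.
Qed.

Lemma Li_term_bound k n z : (2 <= k)%nat -> Rabs z <= 1 ->
  Rabs (z ^ S n / INR (S n) ^ k) <= / INR (S n) ^ 2.
Proof.
  intros Hk Hz; pose proof (INR_S_ge_1 n).
  unfold Rdiv; rewrite Rabs_mult, <- RPow_abs.
  rewrite (Rabs_pos_eq (/ _)) by (apply Rlt_le, Rinv_0_lt_compat, pow_lt; lra).
  rewrite <- (Rmult_1_l (/ INR (S n) ^ 2)).
  apply Rmult_le_compat.
  - apply pow_le, Rabs_pos.
  - apply Rlt_le, Rinv_0_lt_compat, pow_lt; lra.
  - rewrite <- (pow1 (S n)); apply pow_incr; split; [apply Rabs_pos | exact Hz].
  - apply Rinv_le_contravar; [apply pow_lt; lra|].
    replace k with (2 + (k - 2))%nat by lia; rewrite pow_add.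
    rewrite <- (Rmult_1_r (INR (S n) ^ 2)) at 1.
    apply Rmult_le_compat_l; [apply pow_le; lra|].
    rewrite <- (pow1 (k - 2)); apply pow_incr; lra.
Qed.

Lemma ex_series_Li k z : (2 <= k)%nat -> Rabs z <= 1 ->
  ex_series (fun n => z ^ S n / INR (S n) ^ k).
Proof.
  intros Hk Hz.
  apply (ex_series_le (K := R_AbsRing) (V := R_CompleteNormedModule) _ _
           (fun n => Li_term_bound k n z Hk Hz) ex_series_inv_sqr).
Qed.

Definition clamp (z : R) : R := Rmax (-1) (Rmin 1 z).

(* [Li k] frozen outside [-1, 1].  For [k >= 2] it is continuous on all of [R],
   so the mean value theorem applies on closed intervals whose ends are mapped
   to [-1] or [1]. *)
Definition Lic (k : nat) (z : R) : R := Li k (clamp z).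

Lemma Rabs_clamp z : Rabs (clamp z) <= 1.
Proof. unfold clamp, Rmax, Rmin; repeat destruct Rle_dec; apply Rabs_le; lra. Qed.

Lemma Lic_eq k z : Rabs z <= 1 -> Lic k z = Li k z.
Proof.
  intro H; apply Rabs_le_between in H.
  unfold Lic, clamp, Rmax, Rmin; repeat destruct Rle_dec; f_equal; lra.
Qed.

Lemma Lic_0 k : Lic k 0 = 0.
Proof. rewrite Lic_eq, Li_0 by (rewrite Rabs_R0; lra); reflexivity. Qed.

Lemma Lic_1 k : Lic k 1 = zeta k.
Proof. rewrite Lic_eq by (rewrite Rabs_R1; lra); reflexivity. Qed.

Lemma continuity_pt_clamp x : continuity_pt clamp x.
Proof.
  intros eps Heps; exists eps; split; [exact Heps|].
  intros y [_ Hy]; simpl in *; unfold Rdist in *.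
  eapply Rle_lt_trans; [|exact Hy].
  unfold clamp, Rmax, Rmin; repeat destruct Rle_dec;
    unfold Rabs; repeat destruct Rcase_abs; lra.
Qed.

Lemma continuity_pt_Lic k y : (2 <= k)%nat -> continuity_pt (Lic k) y.
Proof.
  intro Hk.
  set (fn := fun n y => clamp y ^ S n / INR (S n) ^ k).
  assert (Hcv : forall x, Un_cv (fun N => SP fn N x) (Lic k x)).
  { intro x; apply is_series_Reals, Series_correct, ex_series_Li;
      [exact Hk | apply Rabs_clamp]. }
  set (r := mkposreal (Rabs y + 1) (Rle_lt_0_plus_1 _ (Rabs_pos y))).
  assert (HN : CVN_r fn r).
  { exists (fun n => / INR (S n) ^ 2), (Series (fun n => / INR (S n) ^ 2)); split.
    - apply is_series_Reals.
      eapply is_series_ext; [|apply Series_correct, ex_series_inv_sqr].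
      intro n; rewrite Rabs_pos_eq; [reflexivity|].
      apply Rlt_le, Rinv_0_lt_compat, pow_lt, INR_S_pos.
    - intros n z _; apply Li_term_bound; [exact Hk | apply Rabs_clamp]. }
  apply (CVU_continuity _ _ _ _
           (CVN_CVU fn (fun x => exist _ (Lic k x) (Hcv x)) r HN)).
  - intros n z _; apply continuity_pt_finite_SF; intros m _.
    apply (continuity_pt_comp clamp (fun t => t ^ S m / INR (S m) ^ k));
      [apply continuity_pt_clamp|].
    apply continuity_pt_ex_derive; auto_derive; exact I.
  - unfold Boule; simpl; rewrite Rminus_0_r; lra.
Qed.

Lemma is_derive_Lic k z :
  Rabs z < 1 -> is_derive (Lic (S k)) z (PSeries (Li_coef k) z).
Proof.
  intro Hz; apply (is_derive_ext_loc (Li (S k))); [|apply is_derive_Li, Hz].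
  exists (mkposreal _ (proj2 (Rlt_0_minus _ _) Hz)); intros t Ht.
  symmetry; apply Lic_eq.
  change (Rabs (t - z) < 1 - Rabs z) in Ht.
  pose proof (Rabs_triang_inv t z); lra.
Qed.

Lemma is_derive_Lic_comp k (g : R -> R) x dg :
  is_derive g x dg -> Rabs (g x) < 1 -> g x <> 0 ->
  is_derive (fun t => Lic (S k) (g t)) x (Li k (g x) / g x * dg).
Proof.
  intros Hg H1 H0; rewrite <- PSeries_Li_coef by exact H0; rewrite Rmult_comm.
  apply (is_derive_comp (Lic (S k)) g x); [apply is_derive_Lic, H1 | exact Hg].
Qed.

Lemma continuity_pt_Lic_comp k (g : R -> R) x :
  (2 <= k)%nat -> ex_derive g x -> continuity_pt (fun t => Lic k (g t)) x.
Proof.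
  intros Hk Hg; apply (continuity_pt_comp g (Lic k));
    [apply continuity_pt_ex_derive, Hg | apply continuity_pt_Lic, Hk].
Qed.

(* The side conditions of the chain rule for [Lic] and the domain conditions
   of [auto_derive] are left as goals, for [side_Li]. *)
Ltac derive_Li :=
  lazymatch goal with
  | |- is_derive (fun t => @?f t + @?g t) _ _ => eapply (is_derive_Rplus f g); derive_Li
  | |- is_derive (fun t => @?f t - @?g t) _ _ => eapply (is_derive_Rminus f g); derive_Li
  | |- is_derive (fun t => @?f t * @?g t) _ _ => eapply (is_derive_Rmult f g); derive_Li
  | |- is_derive (fun t => Lic (S ?k) (@?g t)) ?x _ =>
      eapply (is_derive_Lic_comp k g x); [auto_derive; [..|reflexivity] | |]
  | |- is_derive _ _ _ => auto_derive; [..|reflexivity]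
  end; try exact I.

Ltac continuity_Li :=
  lazymatch goal with
  | |- continuity_pt (fun t => @?f t + @?g t) _ =>
      apply (continuity_pt_plus f g); continuity_Li
  | |- continuity_pt (fun t => @?f t - @?g t) _ =>
      apply (continuity_pt_minus f g); continuity_Li
  | |- continuity_pt (fun t => @?f t * @?g t) _ =>
      apply (continuity_pt_mult f g); continuity_Li
  | |- continuity_pt (fun t => Lic ?k (@?g t)) ?x =>
      apply (continuity_pt_Lic_comp k g x); [lia | auto_derive]
  | |- continuity_pt _ _ => apply continuity_pt_ex_derive; auto_derive
  end; try exact I.

Ltac bound_Li :=
  try rewrite Rabs_Ropp;
  first
    [ apply Rabs_div_lt_1 | apply Rabs_inv_lt_1
    | apply Rabs_div_le_1; [nra|] | apply Rabs_inv_le_1 | idtac ];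
  unfold Rabs; repeat destruct Rcase_abs; nra.

Ltac nonzero_Li :=
  unfold Rdiv;
  repeat first
    [ apply Rmult_integral_contrapositive_currified | apply Rinv_neq_0_compat
    | apply Ropp_neq_0_compat | apply pow_nonzero ];
  nra.

Ltac side_Li :=
  repeat match goal with |- _ /\ _ => split end;
  first [exact I | bound_Li | nonzero_Li].

(** * Polylogarithm identities *)

Lemma Li2_double x : 0 <= x <= 1 -> Li 2 x + Li 2 (- x) = / 2 * Li 2 (x ^ 2).
Proof.
  intro Hx.
  set (F t := Lic 2 t + Lic 2 (- t) - / 2 * Lic 2 (t ^ 2)).
  assert (HF : F x = F 0).
  { apply (eq_of_is_derive_0 F 0 1); try lra; intros y Hy; unfold F.
    - eapply is_derive_eq; [derive_Li; side_Li |].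
      rewrite !Li_1 by bound_Li.
      replace (1 - y ^ 2) with ((1 - y) * (1 - - y)) by ring.
      rewrite ln_mult by lra; field; lra.
    - continuity_Li; side_Li. }
  unfold F in HF; rewrite Ropp_0, pow_i, Lic_0, !Lic_eq in HF by (lia || bound_Li); lra.
Qed.

Lemma Li2_neg_1 : Li 2 (-1) = - / 2 * zeta 2.
Proof.
  pose proof (Li2_double 1 ltac:(lra)) as H.
  rewrite pow1 in H; replace (- (1)) with (-1) in H by ring; unfold zeta; lra.
Qed.

Lemma Li3_double x : 0 <= x <= 1 -> Li 3 x + Li 3 (- x) = / 4 * Li 3 (x ^ 2).
Proof.
  intro Hx.
  set (F t := Lic 3 t + Lic 3 (- t) - / 4 * Lic 3 (t ^ 2)).
  assert (HF : F x = F 0).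
  { apply (eq_of_is_derive_0 F 0 1); try lra; intros y Hy; unfold F.
    - eapply is_derive_eq; [derive_Li; side_Li |].
      replace (Li 2 (- y)) with (/ 2 * Li 2 (y ^ 2) - Li 2 y)
        by (rewrite <- (Li2_double y) by lra; ring).
      field; lra.
    - continuity_Li; side_Li. }
  unfold F in HF; rewrite Ropp_0, pow_i, Lic_0, !Lic_eq in HF by (lia || bound_Li); lra.
Qed.

Lemma Li3_neg_1 : Li 3 (-1) = - 3 / 4 * zeta 3.
Proof.
  pose proof (Li3_double 1 ltac:(lra)) as H.
  rewrite pow1 in H; replace (- (1)) with (-1) in H by ring; unfold zeta; lra.
Qed.

Lemma Li2_Landen z : 0 <= z <= / 2 -> Li 2 z + Li 2 (z / (z - 1)) = - / 2 * ln (1 - z) ^ 2.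
Proof.
  intro Hz.
  set (F t := Lic 2 t + Lic 2 (t / (t - 1)) + / 2 * ln (1 - t) ^ 2).
  assert (HF : F z = F 0).
  { apply (eq_of_is_derive_0 F 0 (/ 2)); try lra; intros y Hy; unfold F.
    - eapply is_derive_eq; [derive_Li; side_Li |].
      rewrite !Li_1 by bound_Li.
      replace (1 - y / (y - 1)) with (/ (1 - y)) by (field; lra).
      rewrite ln_Rinv by lra; unfold Rminus; field; side_Li.
    - continuity_Li; side_Li. }
  unfold F in HF; rewrite Rdiv_0_l, Lic_0, Rminus_0_r, ln_1, !Lic_eq in HF by bound_Li; lra.
Qed.

Lemma Li2_half : Li 2 (/ 2) = / 2 * zeta 2 - / 2 * ln 2 ^ 2.
Proof.
  pose proof (Li2_Landen (/ 2) ltac:(lra)) as H.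
  replace (/ 2 / (/ 2 - 1)) with (-1) in H by field.
  replace (1 - / 2) with (/ 2) in H by field.
  rewrite Li2_neg_1, ln_Rinv in H by lra; lra.
Qed.

Lemma Li2_reflection x : 0 < x < 1 -> Li 2 x + Li 2 (1 - x) = zeta 2 - ln x * ln (1 - x).
Proof.
  intro Hx.
  set (F t := Lic 2 t + Lic 2 (1 - t) + ln t * ln (1 - t)).
  assert (HF : F x = F (/ 2)).
  { apply (eq_of_is_derive_0 F (x / 2) ((x + 1) / 2)); try lra; intros y Hy; unfold F.
    - eapply is_derive_eq; [derive_Li; side_Li |].
      rewrite !Li_1 by bound_Li.
      replace (1 - (1 - y)) with y by ring; field; side_Li.
    - continuity_Li; side_Li. }
  unfold F in HF; rewrite !Lic_eq in HF by bound_Li.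
  replace (1 - / 2) with (/ 2) in HF by field.
  rewrite Li2_half, ln_Rinv in HF by lra; lra.
Qed.

(* The left-hand sides are twice Legendre's chi function at [(1 - z) / (1 + z)]. *)
Lemma Li2_chi_Landen1 z : 0 <= z <= 1 ->
  Li 2 ((1 - z) / (1 + z)) - Li 2 (- ((1 - z) / (1 + z)))
  = 2 * Li 2 (1 - z) - / 2 * Li 2 (1 - z ^ 2).
Proof.
  intro Hz.
  set (F t := Lic 2 ((1 - t) / (1 + t)) - Lic 2 (- ((1 - t) / (1 + t)))
              - 2 * Lic 2 (1 - t) + / 2 * Lic 2 (1 - t ^ 2)).
  assert (HF : F z = F 1).
  { apply (eq_of_is_derive_0 F 0 1); try lra; intros y Hy; unfold F.
    - eapply is_derive_eq; [derive_Li; side_Li |].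
      rewrite !Li_1 by bound_Li.
      replace (1 - (1 - y) / (1 + y)) with (2 * y / (1 + y)) by (field; lra).
      replace (1 - - ((1 - y) / (1 + y))) with (2 / (1 + y)) by (field; lra).
      replace (1 - (1 - y ^ 2)) with (y * y) by ring.
      replace (1 - (1 - y)) with y by ring.
      rewrite !ln_div, !ln_mult by lra; unfold Rminus; field; side_Li.
    - continuity_Li; side_Li. }
  unfold F in HF.
  replace ((1 - 1) / (1 + 1)) with 0 in HF by field.
  replace (1 - 1 ^ 2) with 0 in HF by ring; replace (1 - 1) with 0 in HF by ring.
  rewrite Ropp_0, Lic_0, !Lic_eq in HF by bound_Li.
  lra.
Qed.

Lemma Li2_chi_Landen2 z : 0 <= z <= 1 ->
  Li 2 ((1 - z) / (1 + z)) - Li 2 (- ((1 - z) / (1 + z)))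
  = 2 * Li 2 (1 / (1 + z)) + / 2 * Li 2 (1 - z ^ 2) - zeta 2 + ln (1 + z) ^ 2.
Proof.
  intro Hz.
  set (F t := Lic 2 ((1 - t) / (1 + t)) - Lic 2 (- ((1 - t) / (1 + t)))
              - 2 * Lic 2 (1 / (1 + t)) - / 2 * Lic 2 (1 - t ^ 2) - ln (1 + t) ^ 2).
  assert (HF : F z = F 1).
  { apply (eq_of_is_derive_0 F 0 1); try lra; intros y Hy; unfold F.
    - eapply is_derive_eq; [derive_Li; side_Li |].
      rewrite !Li_1 by bound_Li.
      replace (1 - (1 - y) / (1 + y)) with (2 * y / (1 + y)) by (field; lra).
      replace (1 - - ((1 - y) / (1 + y))) with (2 / (1 + y)) by (field; lra).
      replace (1 - (1 - y ^ 2)) with (y * y) by ring.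
      replace (1 - 1 / (1 + y)) with (y / (1 + y)) by (field; lra).
      rewrite !ln_div, !ln_mult by lra; unfold Rminus; field; side_Li.
    - continuity_Li; side_Li. }
  unfold F in HF.
  replace ((1 - 1) / (1 + 1)) with 0 in HF by field.
  replace (1 / (1 + 1)) with (/ 2) in HF by field.
  replace (1 - 1 ^ 2) with 0 in HF by ring.
  rewrite Ropp_0, Lic_0, !Lic_eq, Li2_half in HF by bound_Li.
  replace (1 + 1) with 2 in HF by ring.
  lra.
Qed.

Lemma Li3_chi_Landen z : 0 <= z <= 1 ->
  Li 3 ((1 - z) / (1 + z)) - Li 3 (- ((1 - z) / (1 + z)))
  = 2 * Li 3 (1 - z) + 2 * Li 3 (1 / (1 + z)) - / 2 * Li 3 (1 - z ^ 2)
    + zeta 2 * ln (1 + z) - / 3 * ln (1 + z) ^ 3 - 7 / 4 * zeta 3.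
Proof.
  intro Hz.
  set (F t := Lic 3 ((1 - t) / (1 + t)) - Lic 3 (- ((1 - t) / (1 + t)))
              - 2 * Lic 3 (1 - t) - 2 * Lic 3 (1 / (1 + t)) + / 2 * Lic 3 (1 - t ^ 2)
              - zeta 2 * ln (1 + t) + / 3 * ln (1 + t) ^ 3).
  assert (HF : F z = F 0).
  { apply (eq_of_is_derive_0 F 0 1); try lra; intros y Hy; unfold F.
    - assert (Hy' : 0 <= y <= 1) by lra.
      eapply is_derive_eq; [derive_Li; side_Li |].
      pose proof (Li2_chi_Landen1 y Hy') as E1; pose proof (Li2_chi_Landen2 y Hy') as E2.
      replace (Li 2 (1 - y)) with
        (/ 2 * (Li 2 ((1 - y) / (1 + y)) - Li 2 (- ((1 - y) / (1 + y))) + / 2 * Li 2 (1 - y ^ 2)))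
        by lra.
      replace (Li 2 (1 / (1 + y))) with
        (/ 2 * (Li 2 ((1 - y) / (1 + y)) - Li 2 (- ((1 - y) / (1 + y)))
                - / 2 * Li 2 (1 - y ^ 2) + zeta 2 - ln (1 + y) ^ 2))
        by lra.
      unfold Rminus; field; side_Li.
    - continuity_Li; side_Li. }
  unfold F in HF.
  replace ((1 - 0) / (1 + 0)) with 1 in HF by field.
  replace (1 / (1 + 0)) with 1 in HF by field.
  rewrite Rminus_0_r, Rplus_0_r, pow_i, Rminus_0_r, ln_1, Lic_1, !Lic_eq in HF
    by (lia || bound_Li).
  replace (- (1)) with (-1) in HF by ring.
  rewrite Li3_neg_1 in HF; lra.
Qed.

Lemma Li3_half : Li 3 (/ 2) = 7 / 8 * zeta 3 - / 2 * zeta 2 * ln 2 + / 6 * ln 2 ^ 3.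
Proof.
  pose proof (Li3_chi_Landen 1 ltac:(lra)) as H.
  replace ((1 - 1) / (1 + 1)) with 0 in H by field.
  replace (1 / (1 + 1)) with (/ 2) in H by field.
  replace (1 - 1 ^ 2) with 0 in H by ring; replace (1 - 1) with 0 in H by ring.
  rewrite Ropp_0, Li_0 in H.
  replace (1 + 1) with 2 in H by ring.
  lra.
Qed.

Lemma Li3_Landen x : 0 < x <= / 2 ->
  Li 3 x + Li 3 (1 - x) + Li 3 (x / (x - 1))
  = zeta 3 + / 6 * ln (1 - x) ^ 3 + zeta 2 * ln (1 - x) - / 2 * ln x * ln (1 - x) ^ 2.
Proof.
  intro Hx.
  set (F t := Lic 3 t + Lic 3 (1 - t) + Lic 3 (t / (t - 1))
              - / 6 * ln (1 - t) ^ 3 - zeta 2 * ln (1 - t) + / 2 * ln t * ln (1 - t) ^ 2).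
  assert (HF : F x = F (/ 2)).
  { apply (eq_of_is_derive_0 F (x / 2) (/ 2)); try lra; intros y Hy; unfold F.
    - assert (Hy' : 0 <= y <= / 2) by lra.
      eapply is_derive_eq; [derive_Li; side_Li |].
      pose proof (Li2_Landen y Hy') as E1; pose proof (Li2_reflection y ltac:(lra)) as E2.
      replace (Li 2 (y / (y - 1))) with (- / 2 * ln (1 - y) ^ 2 - Li 2 y) by lra.
      replace (Li 2 (1 - y)) with (zeta 2 - ln y * ln (1 - y) - Li 2 y) by lra.
      unfold Rminus; field; side_Li.
    - continuity_Li; side_Li. }
  unfold F in HF; rewrite !Lic_eq in HF by bound_Li.
  replace (1 - / 2) with (/ 2) in HF by field.
  replace (/ 2 / (/ 2 - 1)) with (-1) in HF by field.
  rewrite Li3_neg_1, Li3_half, ln_Rinv in HF by lra; lra.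
Qed.

Lemma Li3_neg_third : Li 3 (- / 3) - 2 * Li 3 (/ 3)
  = - 13 / 6 * zeta 3 + zeta 2 * ln 3 - / 6 * ln 3 ^ 3.
Proof.
  pose proof (Li3_Landen (/ 3) ltac:(lra)) as E1.
  pose proof (Li3_Landen (/ 4) ltac:(lra)) as E2.
  pose proof (Li3_double (/ 2) ltac:(lra)) as E3.
  pose proof (Li3_chi_Landen (/ 2) ltac:(lra)) as E4.
  pose proof Li3_half as E5.
  replace (1 - / 3) with (2 / 3) in E1 by field.
  replace (/ 3 / (/ 3 - 1)) with (- / 2) in E1 by field.
  replace (1 - / 4) with (3 / 4) in E2 by field.
  replace (/ 4 / (/ 4 - 1)) with (- / 3) in E2 by field.
  replace ((/ 2) ^ 2) with (/ 4) in E3 by field.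
  replace ((1 - / 2) / (1 + / 2)) with (/ 3) in E4 by field.
  replace (1 - / 2) with (/ 2) in E4 by field.
  replace (1 / (1 + / 2)) with (2 / 3) in E4 by field.
  replace (1 - (/ 2) ^ 2) with (3 / 4) in E4 by field.
  replace (1 + / 2) with (3 / 2) in E4 by field.
  assert (ln_4 : ln 4 = 2 * ln 2)
    by (replace 4 with (2 * 2) by ring; rewrite ln_mult by lra; ring).
  rewrite !ln_div, !ln_Rinv in E1 by lra.
  rewrite ln_div, !ln_Rinv, !ln_4 in E2 by lra.
  rewrite ln_div in E4 by lra.
  lra.
Qed.

(* [y = x / (2 x - 1)] satisfies [x + y = 2 x y], i.e. [1 - x y = (1 - x) (1 - y)]. *)
Lemma Li2_harmonic_pair x : 0 <= x <= / 3 ->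
  Li 2 x + Li 2 (x / (2 * x - 1)) - / 2 * Li 2 (x ^ 2 / (2 * x - 1))
  = - / 4 * ln (1 - 2 * x) ^ 2.
Proof.
  intro Hx.
  set (F t := Lic 2 t + Lic 2 (t / (2 * t - 1)) - / 2 * Lic 2 (t ^ 2 / (2 * t - 1))
              + / 4 * ln (1 - 2 * t) ^ 2).
  assert (HF : F x = F 0).
  { apply (eq_of_is_derive_0 F 0 (/ 3)); try lra; intros y Hy; unfold F.
    - eapply is_derive_eq; [derive_Li; side_Li |].
      rewrite !Li_1 by bound_Li.
      replace (1 - y / (2 * y - 1)) with ((1 - y) / (1 - 2 * y)) by (field; lra).
      replace (1 - y ^ 2 / (2 * y - 1)) with ((1 - y) ^ 2 / (1 - 2 * y)) by (field; lra).
      rewrite !ln_div, ln_pow by (try apply pow_lt; lra).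
      simpl INR; unfold Rminus; field; side_Li.
    - continuity_Li; side_Li. }
  unfold F in HF.
  replace (0 / (2 * 0 - 1)) with 0 in HF by field.
  replace (0 ^ 2 / (2 * 0 - 1)) with 0 in HF by field.
  rewrite Rmult_0_r, Rminus_0_r, ln_1, Lic_0, !Lic_eq in HF by bound_Li.
  lra.
Qed.

(** * The functions P_1, P_2, P_3 *)

Lemma P1_eq w : 0 < w -> P 1 w = ln w.
Proof.
  intro Hw; simpl P; replace (INR 1) with 1 by reflexivity.
  replace (ln w) with (ln w - ln 1) by (rewrite ln_1; ring).
  apply is_RInt_unique, (is_RInt_ext (fun t => / t)).
  - intros x _; cbn [P]; rewrite Rdiv_1_l; reflexivity.
  - apply (is_RInt_derive (V := R_CompleteNormedModule) ln); intros x Hx;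
      assert (0 < x) by (revert Hx; unfold Rmin, Rmax; destruct Rle_dec; lra).
    + auto_derive; [lra | field; lra].
    + apply (ex_derive_continuous (K := R_AbsRing) (V := R_NormedModule)); auto_derive; lra.
Qed.

Lemma P2_eq v : 1 < v -> P 2 v = / 2 * ln v ^ 2 + Li 2 (/ v) - / 2 * zeta 2.
Proof.
  intro Hv.
  change (P 2 v) with (RInt (fun t => P 1 (t - 1) / t) (INR 2) v).
  replace (INR 2) with 2 by (simpl; ring).
  set (Q t := / 2 * ln t ^ 2 + Lic 2 (/ t) - / 2 * zeta 2).
  assert (Q_2 : Q 2 = 0) by (unfold Q; rewrite Lic_eq, Li2_half by bound_Li; field).
  replace (/ 2 * ln v ^ 2 + Li 2 (/ v) - / 2 * zeta 2) with (Q v - Q 2)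
    by (rewrite Q_2; unfold Q; rewrite Lic_eq by bound_Li; ring).
  apply is_RInt_unique, (is_RInt_ext (fun t => ln (t - 1) / t)).
  - intros x Hx; rewrite P1_eq; [reflexivity|].
    revert Hx; unfold Rmin, Rmax; destruct Rle_dec; lra.
  - apply (is_RInt_derive (V := R_CompleteNormedModule) Q); intros x Hx;
      assert (1 < x) by (revert Hx; unfold Rmin, Rmax; destruct Rle_dec; lra).
    + unfold Q; eapply is_derive_eq; [derive_Li; side_Li |].
      rewrite Li_1 by bound_Li.
      replace (1 - / x) with ((x - 1) / x) by (field; lra).
      rewrite ln_div by lra; unfold Rminus; field; side_Li.
    + apply (ex_derive_continuous (K := R_AbsRing) (V := R_NormedModule)); auto_derive; lra.
Qed.

Lemma continuous_P2_shift t : 2 < t -> continuous (fun s => P 2 (s - 1) / s) t.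
Proof.
  intro Ht.
  apply (continuous_ext_loc _
           (fun s => (/ 2 * ln (s - 1) ^ 2 + Lic 2 (/ (s - 1)) - / 2 * zeta 2) * / s)).
  - exists (mkposreal _ (proj2 (Rlt_0_minus _ _) Ht)); intros s Hs.
    change (Rabs (s - t) < t - 2) in Hs; apply Rabs_def2 in Hs.
    rewrite P2_eq, Lic_eq by (lra || bound_Li); reflexivity.
  - apply continuity_pt_filterlim; continuity_Li; side_Li.
Qed.

Definition P3_closed (u : R) : R :=
  / 2 * Lic 3 (/ (u * (2 - u))) - Lic 3 (/ u) - Lic 3 (/ (2 - u))
  + Lic 2 (/ u) * ln (u - 2)
  + / 3 * zeta 3 - / 2 * zeta 2 * ln u
  + / 12 * (ln (u * (u - 2))) ^ 3
  - / 2 * (ln (u - 2)) ^ 2 * ln u.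

Lemma is_derive_P3_closed w : 3 < w -> is_derive P3_closed w (P 2 (w - 1) / w).
Proof.
  intro Hw; unfold P3_closed.
  eapply is_derive_eq; [derive_Li; side_Li |].
  assert (Hw1 : 0 <= / w <= / 3)
    by (split; [apply Rlt_le, Rinv_0_lt_compat | apply Rinv_le_contravar]; lra).
  assert (Hw2 : 0 <= / (w - 1) <= / 2)
    by (split; [apply Rlt_le, Rinv_0_lt_compat | apply Rinv_le_contravar]; lra).
  pose proof (Li2_harmonic_pair (/ w) Hw1) as E1.
  pose proof (Li2_Landen (/ (w - 1)) Hw2) as E2.
  replace (/ w / (2 * / w - 1)) with (/ (2 - w)) in E1 by (field; lra).
  replace ((/ w) ^ 2 / (2 * / w - 1)) with (/ (w * (2 - w))) in E1 by (field; lra).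
  replace (/ (w - 1) / (/ (w - 1) - 1)) with (/ (2 - w)) in E2 by (field; lra).
  rewrite P2_eq, !Lic_eq, Li_1 by (lra || bound_Li).
  replace (1 - / w) with ((w - 1) / w) by (field; lra).
  replace (Li 2 (/ (w * (2 - w)))) with
    (2 * (Li 2 (/ w) + Li 2 (/ (2 - w)) + / 4 * ln (1 - 2 * / w) ^ 2)) by lra.
  replace (Li 2 (/ (2 - w))) with (- / 2 * ln (1 - / (w - 1)) ^ 2 - Li 2 (/ (w - 1)))
    by lra.
  replace (1 - 2 * / w) with ((w - 2) / w) by (field; lra).
  replace (1 - / (w - 1)) with ((w - 2) / (w - 1)) by (field; lra).
  unfold Rminus; rewrite !ln_div, ln_mult by lra.
  field; side_Li.
Qed.

Lemma P3_closed_3 : P3_closed 3 = 0.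
Proof.
  unfold P3_closed.
  replace (/ (3 * (2 - 3))) with (- / 3) by field.
  replace (/ (2 - 3)) with (-1) by field.
  replace (3 * (3 - 2)) with 3 by ring; replace (3 - 2) with 1 by ring.
  rewrite ln_1, !Lic_eq, Li3_neg_1 by bound_Li.
  pose proof Li3_neg_third; lra.
Qed.

Lemma continuity_pt_P3_closed w : 3 <= w -> continuity_pt P3_closed w.
Proof. intro Hw; unfold P3_closed; continuity_Li; side_Li. Qed.

Theorem theorem4 (u : R) (hu : 3 <= u) :
  P 3 u =
    / 2 * Li 3 (/ (u * (2 - u))) - Li 3 (/ u) - Li 3 (/ (2 - u))
    + Li 2 (/ u) * ln (u - 2)
    + / 3 * zeta 3 - / 2 * zeta 2 * ln u
    + / 12 * (ln (u * (u - 2))) ^ 3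
    - / 2 * (ln (u - 2)) ^ 2 * ln u.
Proof.
  change (P 3 u) with (RInt (fun t => P 2 (t - 1) / t) (INR 3) u).
  replace (INR 3) with 3 by (simpl; ring).
  rewrite (RInt_eq_of_is_derive _ P3_closed 3 u 2), P3_closed_3, Rminus_0_r; try lra.
  - unfold P3_closed; rewrite !Lic_eq by bound_Li; reflexivity.
  - intros t Ht; apply continuous_P2_shift; lra.
  - intros t Ht; apply is_derive_P3_closed; lra.
  - intros t Ht; apply continuity_pt_P3_closed; lra.
Qed.
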